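(* Let $q$ be a prime power and $m\ge 1$. Let $f(x)=\sum_{i=0}^{m-1} f_i x^{[i]}$ be a $q$-polynomial over $\mathbb{F}_{q^m}$ (where $[i]$ denotes $q^i$), and let $\bar f(x)$ be its full $q$-reverse. Let $\mathcal{A}=\{\alpha_0,\dots,\alpha_{m-1}\}$ and $\mathcal{B}=\{\beta_0,\dots,\beta_{m-1}\}$ be ordered bases of $\mathbb{F}_{q^m}$ over $\mathbb{F}_q$, with dual bases $\mathcal{A}'=\{\alpha'_0,\dots,\alpha'_{m-1}\}$ and $\mathcal{B}'=\{\beta'_0,\dots,\beta'_{m-1}\}$. Then for any $M\in\mathbb{F}_q^{m\times m}$, $$M=[f(x)]_{\mathcal{A}}^{\mathcal{B}} \iff M^T=[\bar f(x)]_{\mathcal{B}'}^{\mathcal{A}'}.$$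
   Context: A $q$-polynomial over $\mathbb{F}_{q^m}$ is $f(x)=\sum_i f_i x^{[i]}$ with $f_i\in\mathbb{F}_{q^m}$ and $x^{[i]}=x^{q^i}$; its evaluation is an $\mathbb{F}_q$-linear map $\mathbb{F}_{q^m}\to\mathbb{F}_{q^m}$. Coefficients are indexed cyclically: $f_i:=f_{i \bmod m}$ for all integers $i$. The full $q$-reverse of $f(x)$ is $\bar f(x)=\sum_{i=0}^{m-1}\bar f_i x^{[i]}$ with $\bar f_i=f_{-i}^{[i]}=(f_{-i})^{q^i}$. For a linear map $T:\mathbb{F}_{q^m}\to\mathbb{F}_{q^m}$ and ordered bases $\mathcal{A}=\{\alpha_i\}$, $\mathcal{B}=\{\beta_j\}$, $[T]_{\mathcal{A}}^{\mathcal{B}}$ is the unique matrix over $\mathbb{F}_q$ with $T(\alpha_i)=\sum_j ([T]_{\mathcal{A}}^{\mathcal{B}})_{ij}\beta_j$ for all $i$ (row convention). The dual basis $\mathcal{A}'=\{\alpha'_j\}$ of $\mathcal{A}$ satisfies $\mathrm{Tr}(\alpha_i\alpha'_j)=1$ if $i=j$ and $0$ otherwise, where $\mathrm{Tr}(x)=\sum_{\ell=0}^{m-1}x^{[\ell]}$. All indices start at 0. *)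

(* F = F_q (a finite field, q = #|F|), L = F_{q^m} as a
   finite-dimensional field extension of F with \dim {:L} = m. *)
From HB Require Import structures.
From mathcomp Require Import all_boot all_order all_algebra all_field.
Set Implicit Arguments. Unset Strict Implicit. Unset Printing Implicit Defensive.
Import GRing.Theory.
Local Open Scope ring_scope.

Section QPoly.
Variables (F : finFieldType) (L : fieldExtType F) (m : nat).

Definition qpow (x : L) (i : nat) : L := x ^+ (#|F| ^ i).

Definition qeval (f : nat -> L) (x : L) : L :=
  \sum_(i < m) f i * qpow x i.

Definition qcoef (f : nat -> L) (i : nat) : L := f (i %% m)%N.

(* full q-reverse: bar f_i = (f_{-i})^{[i]}, with -i taken mod m *)
Definition qrev (f : nat -> L) (i : nat) : L :=
  qpow (qcoef f ((m - i %% m) %% m)%N) i.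

Definition qtrace (x : L) : L := \sum_(l < m) qpow x l.

Definition is_dual_basis (A A' : m.-tuple L) : Prop :=
  forall i j : 'I_m, qtrace (tnth A i * tnth A' j) = (i == j)%:R.

(* M = [T]_A^B (row convention): T(alpha_i) = sum_j M_ij beta_j *)
Definition is_mat_of (T : L -> L) (A B : m.-tuple L) (M : 'M[F]_m) : Prop :=
  forall i : 'I_m, T (tnth A i) = \sum_(j < m) M i j *: tnth B j.

End QPoly.

(* The Frobenius twist x |-> x^[i] is an F_q-linear field automorphism, so the
   trace form (x, y) |-> Tr(x y) satisfies Tr(f(x) y) = Tr(x fbar(y)): both sides
   equal the double sum over a, b of f_{a-b}^[b] x^[a] y^[b], indices mod m.
   Since the trace form is nondegenerate, coordinates in a basis are read off by
   pairing with the dual basis: [f]_A^B has entries Tr(f(alpha_i) beta'_j), and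
   [fbar]_{B'}^{A'} has entries Tr(fbar(beta'_j) alpha_i), which agree by the
   adjointness above. *)
From HB Require Import structures.
From mathcomp Require Import all_boot all_order all_algebra all_field.
Import GRing.Theory.
Local Open Scope ring_scope.

Section Frobenius.
Context {F : finFieldType} {L : fieldExtType F}.
Implicit Types (x y : L) (c : F).

Lemma exprD_card x y : (x + y) ^+ #|F| = x ^+ #|F| + y ^+ #|F|.
Proof.
have [p p_pr pcharFp] := finPcharP F.
apply: exprDn_pchar; rewrite (card_pprimeChar pcharFp).
by rewrite pnatX (pnatE _ p_pr) pchar_lalg pcharFp.
Qed.

Lemma qpowS x i : qpow x i.+1 = qpow x i ^+ #|F|.
Proof. by rewrite /qpow expnSr exprM. Qed.

Lemma qpow0 i : qpow (0 : L) i = 0.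
Proof. by rewrite /qpow expr0n expn_eq0 (negPf (lt0n_neq0 (ltnW (finNzRing_gt1 F)))). Qed.

Lemma qpowD x y i : qpow (x + y) i = qpow x i + qpow y i.
Proof. by elim: i => [|i IH]; rewrite ?qpowS ?IH ?exprD_card // /qpow !expr1. Qed.

Lemma qpow_sum I (r : seq I) (P : pred I) (G : I -> L) i :
  qpow (\sum_(j <- r | P j) G j) i = \sum_(j <- r | P j) qpow (G j) i.
Proof. by elim/big_rec2: _ => [|j a b _ <-]; rewrite ?qpow0 ?qpowD. Qed.

Lemma qpowM x y i : qpow (x * y) i = qpow x i * qpow y i.
Proof. by rewrite /qpow exprMn. Qed.

Lemma qpowA x i j : qpow (qpow x i) j = qpow x (i + j).
Proof. by rewrite /qpow -exprM expnD. Qed.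

Lemma qpow_alg c i : qpow (c%:A : L) i = c%:A.
Proof.
elim: i => [|i IH]; first by rewrite /qpow expr1.
by rewrite qpowS IH -in_algE -rmorphXn expf_card.
Qed.

Lemma qpowZ c x i : qpow (c *: x) i = c *: qpow x i.
Proof. by rewrite -mulr_algl qpowM qpow_alg mulr_algl. Qed.

Lemma qpow_modn x i : qpow x i = qpow x (i %% \dim {:L}).
Proof.
have qpow_dim y : qpow y (\dim {:L}) = y.
  by apply/eqP; rewrite /qpow -Fermat's_little_theorem memvf.
rewrite {1}(divn_eq i (\dim {:L})) addnC -qpowA.
elim: (i %/ _)%N => [|k IH]; first by rewrite mul0n /qpow expn0 expr1.
by rewrite mulSn addnC -qpowA IH qpow_dim.
Qed.

End Frobenius.

Section Trace.
Context {F : finFieldType} {L : fieldExtType F} {m : nat}.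
Implicit Types (x y : L) (c : F) (X Y : m.-tuple L).

Lemma qtrace0 : qtrace m (0 : L) = 0.
Proof. by rewrite /qtrace big1 // => l _; rewrite qpow0. Qed.

Lemma qtraceD x y : qtrace m (x + y) = qtrace m x + qtrace m y.
Proof. by rewrite /qtrace -big_split; apply: eq_bigr => l _; rewrite qpowD. Qed.

Lemma qtrace_sum I (r : seq I) (P : pred I) (G : I -> L) :
  qtrace m (\sum_(j <- r | P j) G j) = \sum_(j <- r | P j) qtrace m (G j).
Proof. by elim/big_rec2: _ => [|j a b _ <-]; rewrite ?qtrace0 ?qtraceD. Qed.

Lemma qtraceZ c x : qtrace m (c *: x) = c *: qtrace m x.
Proof. by rewrite /qtrace scaler_sumr; apply: eq_bigr => l _; rewrite qpowZ. Qed.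

Lemma is_dual_basis_sym {X Y} : is_dual_basis X Y -> is_dual_basis Y X.
Proof. by move=> dXY i j; rewrite mulrC dXY eq_sym. Qed.

Lemma qtrace_dual_coord {X Y} (c : 'I_m -> F) j :
  is_dual_basis X Y ->
  qtrace m ((\sum_(i < m) c i *: tnth X i) * tnth Y j) = (c j)%:A.
Proof.
move=> dXY; rewrite mulr_suml qtrace_sum (bigD1 j) //= big1 ?addr0.
  by rewrite -scalerAl qtraceZ dXY eqxx.
by move=> i /negPf neq_ij; rewrite -scalerAl qtraceZ dXY neq_ij scaler0.
Qed.

Lemma dual_basis_of {X Y} :
  basis_of fullv X -> is_dual_basis X Y -> basis_of fullv Y.
Proof.
move=> bX /is_dual_basis_sym dYX.
rewrite basisEfree subvf (size_basis bX) size_tuple leqnn !andbT.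
apply/freeP => k k_dep i; apply: (fmorph_inj (in_alg L)).
rewrite rmorph0 /= -(qtrace_dual_coord k i dYX).
have -> : \sum_(j < m) k j *: tnth Y j = 0.
  by rewrite -[RHS]k_dep; apply: eq_bigr => j _; rewrite (tnth_nth 0).
by rewrite mul0r qtrace0.
Qed.

Lemma dual_basis_coordP {X Y} {c : 'I_m -> F} {x} :
  basis_of fullv X -> is_dual_basis X Y ->
  x = \sum_(i < m) c i *: tnth X i <->
  forall j, qtrace m (x * tnth Y j) = (c j)%:A.
Proof.
move=> bX dXY; split=> [-> j|trace_c]; first exact: qtrace_dual_coord.
have x_coord := coord_basis bX (memvf x).
have coord_c j : coord X j x = c j.
  apply: (fmorph_inj (in_alg L)); rewrite /= -trace_c.
  rewrite -(qtrace_dual_coord (fun i => coord X i x) j dXY) [in RHS]x_coord.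
  by congr (qtrace m (_ * _)); apply: eq_bigr => i _; rewrite (tnth_nth 0).
by rewrite {1}x_coord; apply: eq_bigr => i _; rewrite (tnth_nth 0) coord_c.
Qed.

Lemma is_mat_of_adjoint {T T' : L -> L} {A B A' B' : m.-tuple L} {M : 'M[F]_m} :
  basis_of fullv B -> is_dual_basis B B' ->
  basis_of fullv A' -> is_dual_basis A' A ->
  (forall x y, qtrace m (T x * y) = qtrace m (x * T' y)) ->
  is_mat_of T A B M <-> is_mat_of T' B' A' M^T.
Proof.
move=> bB dB bA' dA' adjT.
have entry_adjoint i j :
    qtrace m (T' (tnth B' j) * tnth A i) = qtrace m (T (tnth A i) * tnth B' j).
  by rewrite adjT mulrC.
split=> [matT j | matT' i].
- apply/(dual_basis_coordP bA' dA') => i; rewrite mxE entry_adjoint.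
  by have /(dual_basis_coordP bB dB) := matT i; apply.
- apply/(dual_basis_coordP bB dB) => j; rewrite -entry_adjoint.
  by have /(dual_basis_coordP bA' dA')/(_ i) := matT' j; rewrite mxE.
Qed.

End Trace.

Lemma val_ordD n (u v : 'I_n.+1) : val (u + v) = ((u + v) %% n.+1)%N.
Proof. by []. Qed.

Lemma val_ordN n (u : 'I_n.+1) : val (- u) = ((n.+1 - u) %% n.+1)%N.
Proof. by []. Qed.

Lemma qtrace_qeval_qrev (F : finFieldType) (L : fieldExtType F) (m : nat)
    (f : nat -> L) (x y : L) :
  \dim {:L} = m ->
  qtrace m (qeval m f x * y) = qtrace m (x * qeval m (qrev m f) y).
Proof.
case: m => [|n] dimL.
  by have : (0 < \dim {:L})%N := adim_gt0 (aspacef L); rewrite dimL.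
have qpow_mod (z : L) e : qpow z e = qpow z (e %% n.+1) by rewrite [LHS]qpow_modn dimL.
rewrite /qtrace /qeval.
(* Exponents are summed in 'I_m = Z/mZ, where both reindexings are bijective. *)
transitivity (\sum_(a < n.+1) \sum_(b < n.+1)
    qpow (f (val (a - b))) b * qpow x a * qpow y b).
  rewrite [RHS]exchange_big /=; apply: eq_bigr => b _.
  rewrite mulr_suml qpow_sum (reindex_inj (addIr (- b))); apply: eq_bigr => a _.
  by rewrite !qpowM qpowA (qpow_mod x) -val_ordD subrK.
apply: eq_bigr => a _.
rewrite mulr_sumr qpow_sum [RHS](reindex_inj (addIr (- a))); apply: eq_bigr => b _.
rewrite !qpowM /qrev /qcoef !qpowA modn_mod (modn_small (ltn_ord _)) -val_ordN opprB.
rewrite (qpow_mod y (_ + _)) (qpow_mod (f _) (_ + _)) -!val_ordD subrK.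
by rewrite mulrA [qpow x a * _]mulrC.
Qed.

Theorem lemma1 (F : finFieldType) (L : fieldExtType F) (m : nat)
  (f : nat -> L) (A B A' B' : m.-tuple L) (M : 'M[F]_m) :
  (0 < m)%N ->
  basis_of fullv A -> basis_of fullv B ->
  is_dual_basis A A' -> is_dual_basis B B' ->
  (is_mat_of (qeval m f) A B M <-> is_mat_of (qeval m (qrev m f)) B' A' M^T).
Proof.
move=> _ bA bB dA dB.
have dimL : \dim {:L} = m := size_basis bA.
apply: (is_mat_of_adjoint bB dB (dual_basis_of bA dA) (is_dual_basis_sym dA)).
by move=> x y; apply: qtrace_qeval_qrev.
Qed.
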